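(* A Level-SP PAF $\psi$ is certainty preserving if and only if $\psi$ is unanimous and $\psi$ admits a max-min representation whose phantom functions $f_S$, $S\subseteq N$, are all constant functions. Equivalently, a Level-SP PAF $\psi$ is certainty preserving iff there exist constants $\beta_S\in[0,1]$ ($S\subseteq N$), weakly increasing with respect to inclusion, with $\beta_\emptyset=0$, $\beta_N=1$, such that for all $\mathbf P\in\mathcal C^N$ and $a\in\Lambda$, $\Psi(\mathbf P)(a)=\max_{S\subseteq N}\min(\beta_S,\min_{i\in S}P_i(a))$.
   Context: Let $N=\{1,\dots,n\}$, $\Lambda\subseteq\mathbb R$ a nonempty Borel set, $\mathcal P$ the Borel probability measures on $\Lambda$, $\mathcal C$ the CDFs on $\Lambda$, $\pi(p)(a)=p(\{x\in\Lambda:x\le a\})$. A PAF is a map $\psi:\mathcal P^N\to\mathcal P$ with associated CAF $\Psi$ given by $\Psi(\pi(p_1),\dots,\pi(p_n))=\pi(\psi(p_1,\dots,p_n))$; $P_i=\pi(p_i)$. $\mathbf z_{-i}(z_i')$ is $\mathbf z$ with $i$-th coordinate replaced by $z_i'$. $\psi$ is Level-SP if for every $i$, $\mathbf P$, $P_i'$, $a$: $P_i(a)<\Psi(\mathbf P)(a)\Rightarrow\Psi(\mathbf P)(a)\le\Psi(\mathbf P_{-i}(P_i'))(a)$ and $P_i(a)>\Psi(\mathbf P)(a)\Rightarrow\Psi(\mathbf P)(a)\ge\Psi(\mathbf P_{-i}(P_i'))(a)$. $\psi$ is unanimous if $\psi(p,\dots,p)=p$. A max-min representation of $\psi$ with phantom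 functions $(f_S)_{S\subseteq N}$ consists of weakly increasing right-continuous $f_S:\Lambda\to[0,1]$ with $f_S\le f_{S'}$ whenever $S\subseteq S'$, such that $\Psi(\mathbf P)(a)=\max_{S\subseteq N}\min(f_S(a),\min_{i\in S}P_i(a))$ for all $\mathbf P,a$ (minimum over the empty set is $1$); every Level-SP PAF admits one. $\psi$ is certainty preserving if for every profile $\mathbf p$ and every Borel $A\subseteq\Lambda$: if $p_i(A)=1$ for all $i\in N$ then $\psi(\mathbf p)(A)=1$. *)

From HB Require Import structures.
From mathcomp Require Import all_boot all_order all_algebra.
From mathcomp Require Import all_classical all_reals all_analysis.
Set Implicit Arguments. Unset Strict Implicit. Unset Printing Implicit Defensive.
Import Order.TTheory GRing.Theory Num.Theory.
Local Open Scope classical_set_scope.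
Local Open Scope ring_scope.

(* Borel probability measures on the Borel set Lambda of R are encoded as
   Borel probability measures on R concentrated on Lambda (canonical
   bijection). *)
Definition prob_on (R : realType) (Lam : set R) (p : probability R R) : Prop :=
  p Lam = 1%E.

Definition profile_on (R : realType) (n : nat) (Lam : set R)
  (p : 'I_n -> probability R R) : Prop := forall i, prob_on Lam (p i).

Definition is_PAF (R : realType) (n : nat) (Lam : set R)
  (psi : ('I_n -> probability R R) -> probability R R) : Prop :=
  forall p, profile_on Lam p -> prob_on Lam (psi p).

Definition paf_cdf (R : realType) (Lam : set R) (p : probability R R) (a : R) : R :=
  fine (p (Lam `&` `]-oo, a])).

Definition repl (T : Type) (n : nat) (z : 'I_n -> T) (i : 'I_n) (z2 : T) :
  'I_n -> T := fun j => if j == i then z2 else z j.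

Definition level_SP (R : realType) (n : nat) (Lam : set R)
  (psi : ('I_n -> probability R R) -> probability R R) : Prop :=
  forall (i : 'I_n) (p : 'I_n -> probability R R) (p2 : probability R R) (a : R),
    profile_on Lam p -> prob_on Lam p2 -> Lam a ->
    (paf_cdf Lam (p i) a < paf_cdf Lam (psi p) a ->
       paf_cdf Lam (psi p) a <= paf_cdf Lam (psi (repl p i p2)) a) /\
    (paf_cdf Lam (p i) a > paf_cdf Lam (psi p) a ->
       paf_cdf Lam (psi p) a >= paf_cdf Lam (psi (repl p i p2)) a).

Definition unanimous (R : realType) (n : nat) (Lam : set R)
  (psi : ('I_n -> probability R R) -> probability R R) : Prop :=
  forall p : probability R R, prob_on Lam p ->
    forall A : set R, measurable A -> psi (fun _ => p) A = p A.

Definition certainty_preserving (R : realType) (n : nat) (Lam : set R)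
  (psi : ('I_n -> probability R R) -> probability R R) : Prop :=
  forall p : 'I_n -> probability R R, profile_on Lam p ->
    forall A : set R, measurable A -> A `<=` Lam ->
      (forall i, p i A = 1%E) -> psi p A = 1%E.

Definition maxmin (R : realType) (n : nat) (f : {set 'I_n} -> R -> R)
  (P : 'I_n -> R) (a : R) : R :=
  \big[Num.max/0]_(S : {set 'I_n})
     Num.min (f S a) (\big[Num.min/1]_(i in S) P i).

Definition phantom_fun (R : realType) (Lam : set R) (g : R -> R) : Prop :=
  (forall a, Lam a -> 0 <= g a <= 1) /\
  (forall a b, Lam a -> Lam b -> a <= b -> g a <= g b) /\
  (forall a, Lam a -> forall e : R, 0 < e -> exists2 d : R, 0 < d &
     forall b, Lam b -> a <= b -> b < a + d -> `|g b - g a| < e).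

Definition maxmin_representation (R : realType) (n : nat) (Lam : set R)
  (psi : ('I_n -> probability R R) -> probability R R)
  (f : {set 'I_n} -> R -> R) : Prop :=
  (forall S, phantom_fun Lam (f S)) /\
  (forall (S S2 : {set 'I_n}) a, Lam a -> S \subset S2 -> f S a <= f S2 a) /\
  (forall p, profile_on Lam p -> forall a, Lam a ->
     paf_cdf Lam (psi p) a = maxmin f (fun i => paf_cdf Lam (p i) a) a).

Definition constant_on (R : realType) (Lam : set R) (g : R -> R) : Prop :=
  forall a b, Lam a -> Lam b -> g a = g b.

(* For a Level-SP PAF psi and a point a of Lam, the value
   Psi(P)(a) depends only on the numbers P_i(a) and is monotone in them; it is
   left unchanged when an agent's report moves while staying strictly on one
   side of Psi(P)(a).  Comparing an arbitrary profile with the two-point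
   profiles "agents in S report delta_x, the others delta_y" (x <= a < y)
   yields Psi(P)(a) = max_S min(beta_S(a), min_{i in S} P_i(a)) with
   beta_S(a) the value of psi at such a two-point profile.  If psi is
   certainty preserving, psi of a two-point profile is concentrated on {x, y},
   so beta_S(a) does not depend on a, beta_0 = 0 and beta_N = 1.
   Conversely, a max-min formula with constants, beta_0 = 0, makes the
   measure psi(p) dominated by sum_i p_i (compared interval by interval), so
   psi(p) charges no set that all p_i neglect; with beta_N = 1 it is
   unanimous. *)

From HB Require Import structures.
From mathcomp Require Import all_boot all_order all_algebra.
From mathcomp Require Import all_classical all_reals all_analysis.
Import Order.TTheory GRing.Theory Num.Theory.
Local Open Scope classical_set_scope.
Local Open Scope ring_scope.

Section interval_domination.
Variable R : realType.

(* A measure on R viewed on the Borel sets and on the semiring of half-open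
   intervals ]x, y]; these views let us invoke the uniqueness of the
   measure extension from intervals to Borel sets. *)
Definition borel_view (m : {measure set R -> \bar R}) :
  set (measurableTypeR R) -> \bar R := fun A => m A.
HB.instance Definition _ m := isMeasure.Build _ (measurableTypeR R) R
  (borel_view m) (measure0 m) (measure_ge0 m) (@measure_semi_sigma_additive _ _ _ m).

Definition ocitv_view (m : {measure set R -> \bar R}) :
  set (ocitv_type R) -> \bar R := fun A => m A.

Lemma ocitv_view_semi_sigma_additive m : semi_sigma_additive (ocitv_view m).
Proof.
move=> F mF tF mU; apply: (@measure_semi_sigma_additive _ _ _ m) => //.
- by move=> i; apply: sub_sigma_algebra; exact: mF.
- exact: sub_sigma_algebra.
Qed.

HB.instance Definition _ m := isMeasure.Build _ (ocitv_type R) R (ocitv_view m)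
  (measure0 m) (fun A => measure_ge0 m A) (ocitv_view_semi_sigma_additive m).

Lemma measure_lt_oo (m : {measure set R -> \bar R}) A :
  measurable A -> (m setT < +oo)%E -> (m A < +oo)%E.
Proof. by move=> mA; apply: le_lt_trans; apply: le_measure; rewrite ?inE. Qed.

(* Domination of measures on R is checked on half-open intervals: the larger
   measure m2 is the outer measure of its restriction to intervals, and every
   interval cover is also charged more by m2 than by m1. *)
Lemma le_measure_ocitv (m1 m2 : {measure set R -> \bar R}) :
  (m2 setT < +oo)%E ->
  (forall x y : R, (m1 `]x, y]%classic <= m2 `]x, y]%classic)%E) ->
  forall A, measurable A -> (m1 A <= m2 A)%E.
Proof.
move=> m2oo le_itv A mA.
have sf : sigma_finite [set: ocitv_type R] (ocitv_view m2).
  exists (fun k : nat => `] (- k%:R)%R, k%:R]%classic); first by rewrite bigcup_itvT.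
  by move=> k; split; [exact: is_ocitv|exact: measure_lt_oo].
have ext := @measure_extension_unique _ _ _ (ocitv_view m2) sf (borel_view m2)
  (fun X mX => erefl) A mA.
change (m1 A <= borel_view m2 A)%E; rewrite -ext /measure_extension.
apply/le_ereal_inf_tmp => _ [B [mB AB] <-].
have mB' k : measurable (B k : set R) by apply: sub_sigma_algebra; exact: mB.
apply: (@le_trans _ _ (m1 (\bigcup_k B k))).
  by apply: le_measure; rewrite ?inE//; exact: bigcupT_measurable.
apply: le_trans (generalized_Boole_inequality m1 mB' (bigcupT_measurable _ mB')) _.
apply: lee_nneseries => [k _ _|k _]; first exact: measure_ge0.
by have [[x y] _ <-] := mB k; exact: le_itv.
Qed.

Lemma le_measure_bigcup (m1 m2 : {measure set R -> \bar R}) (F : (set R)^nat) :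
  (forall k, measurable (F k)) -> nondecreasing_seq F ->
  (forall k, (m1 (F k) <= m2 (F k))%E) ->
  (m1 (\bigcup_k F k) <= m2 (\bigcup_k F k))%E.
Proof.
move=> mF ndF le_F.
have c1 := @nondecreasing_cvg_mu _ _ _ m1 F mF (bigcupT_measurable F mF) ndF.
have c2 := @nondecreasing_cvg_mu _ _ _ m2 F mF (bigcupT_measurable F mF) ndF.
rewrite -(cvg_lim _ c1)// -(cvg_lim _ c2)//.
by apply: lee_lim; [exact: cvgP c1|exact: cvgP c2|exact: nearW].
Qed.

Lemma le_measure_bigcap (m1 m2 : {measure set R -> \bar R}) (F : (set R)^nat) :
  (forall k, measurable (F k)) -> nonincreasing_seq F ->
  (m1 (F 0%N) < +oo)%E -> (m2 (F 0%N) < +oo)%E ->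
  (forall k, (m1 (F k) <= m2 (F k))%E) ->
  (m1 (\bigcap_k F k) <= m2 (\bigcap_k F k))%E.
Proof.
move=> mF niF f1 f2 le_F.
have c1 := nonincreasing_cvg_mu f1 mF (bigcapT_measurable mF) niF.
have c2 := nonincreasing_cvg_mu f2 mF (bigcapT_measurable mF) niF.
rewrite -(cvg_lim _ c1)// -(cvg_lim _ c2)//.
by apply: lee_lim; [exact: cvgP c1|exact: cvgP c2|exact: nearW].
Qed.

End interval_domination.

(* Lam-rays Lam `&` ]-oo, c] are increasing unions of rays ending at points of
   Lam: take points of Lam approaching the supremum of the ray from below. *)
Lemma Lam_ray_exhaustion {R : realType} {Lam : set R} {c : R} :
  (Lam `&` `]-oo, c]) !=set0 ->
  exists b : nat -> R, (forall k, Lam (b k) /\ b k <= c) /\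
    {homo b : i j / (i <= j)%N >-> i <= j} /\
    Lam `&` `]-oo, c] = \bigcup_k (Lam `&` `]-oo, b k]).
Proof.
set E := Lam `&` `]-oo, c] => E0.
have hsE : has_sup E by split => //; exists c => z [_]; rewrite /= in_itv.
set s := sup E.
have le_s z : E z -> z <= s by move=> Ez; exact: sup_upper_bound.
have [Es|nEs] := pselect (E s).
  exists (fun _ => s); split; first by move=> _; case: Es; rewrite /= in_itv.
  split => //; apply/seteqP; split=> z.
    by move=> Ez; exists 0%N => //; split; [case: Ez|rewrite /= in_itv /= le_s].
  move=> [_ _ [Lz]]; rewrite /= in_itv /= => zs; split => //.
  by rewrite /= in_itv /= (le_trans zs) //; case: Es; rewrite /= in_itv.
have near_s k : exists2 y, E y & s - (k.+1%:R)^-1 < y.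
  by apply: sup_gt => //; rewrite ltrBlDr ltrDl invr_gt0 ltr0n.
pose b' k := projT1 (cid2 (near_s k)).
have Eb' k : E (b' k) by rewrite /b'; case: cid2.
have b'_gt k : s - (k.+1%:R)^-1 < b' k by rewrite /b'; case: cid2.
pose b := fix b k := if k is k'.+1 then Num.max (b k') (b' k) else b' 0%N.
have Eb k : E (b k) by elim: k => [|k IH] //=; rewrite /Num.max; case: ifP.
have b'_le k : b' k <= b k by case: k => [|k] //=; rewrite le_max lexx orbT.
exists b; split; first by move=> k; have [? ] := Eb k; rewrite /= in_itv.
split; first by apply/nondecreasing_seqP => k /=; rewrite le_max lexx.
apply/seteqP; split=> z.
  move=> Ez; have zs : z < s.
    by rewrite lt_neqAle le_s // andbT; apply: contra_notN nEs => /eqP <-.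
  pose k := Num.truncn ((s - z)^-1).
  have hk : (k.+1%:R)^-1 < s - z.
    rewrite -[X in _ < X]invrK ltf_pV2 ?posrE ?invr_gt0 ?subr_gt0 ?ltr0n//.
    exact: truncnS_gt.
  exists k => //; split; first by case: Ez.
  rewrite /= in_itv /=; apply: (le_trans _ (b'_le k)); apply/ltW.
  by apply: lt_trans (b'_gt k); rewrite ltrBrDl addrC -ltrBrDl.
move=> [k _ [Lz]]; rewrite /= in_itv /= => zb; split => //.
by rewrite /= in_itv /= (le_trans zb)//; have [_] := Eb k; rewrite /= in_itv.
Qed.

Section support_domination.
Context {R : realType} {Lam : set R} {m1 m2 : {measure set R -> \bar R}}.
Hypothesis mL : measurable Lam.
Hypotheses (m1_fin : (m1 setT < +oo)%E) (m2_fin : (m2 setT < +oo)%E).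
Hypothesis le_ray :
  forall a, Lam a -> (m1 (Lam `&` `]-oo, a]) <= m2 (Lam `&` `]-oo, a]))%E.
Hypothesis le_itv : forall a b, Lam a -> Lam b -> a <= b ->
  (m1 (Lam `&` `]a, b]) <= m2 (Lam `&` `]a, b]))%E.

Let mLI (i : interval R) : measurable (Lam `&` [set` i]).
Proof. exact: measurableI. Qed.

Lemma le_measure_Lam_ray y :
  (m1 (Lam `&` `]-oo, y]) <= m2 (Lam `&` `]-oo, y]))%E.
Proof.
have [->|/set0P ne] := eqVneq (Lam `&` `]-oo, y]) set0; first by rewrite !measure0.
have [b [Lb [ndb ->]]] := Lam_ray_exhaustion ne.
apply: le_measure_bigcup => [k|i j ij|k]; first exact: mLI.
- apply/subsetPset => z [Lz]; rewrite /= ?in_itv /= => zb.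
  by split => //; apply: (le_trans zb); exact: ndb.
- by apply: le_ray; case: (Lb k).
Qed.

(* For a in Lam, ]a, y] is exhausted by ]a, max a (b k)] with b from
   [Lam_ray_exhaustion] applied to the ray ending at y. *)
Lemma le_measure_Lam_itvl a y : Lam a ->
  (m1 (Lam `&` `]a, y]) <= m2 (Lam `&` `]a, y]))%E.
Proof.
move=> La.
have [ya|ay] := ltP y a.
  suff -> : Lam `&` `]a, y] = set0 by rewrite !measure0.
  apply/seteqP; split => z // [_]; rewrite /= ?in_itv /= => /andP[az zy].
  by have := lt_trans (le_lt_trans zy ya) az; rewrite ltxx.
have [E0|/set0P ne] := eqVneq (Lam `&` `]-oo, y]) set0.
  suff -> : Lam `&` `]a, y] = set0 by rewrite !measure0.
  apply/seteqP; split => // z [Lz]; rewrite /= ?in_itv /= => /andP[_ zy].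
  have : (Lam `&` `]-oo, y]) z by split => //; rewrite /= ?in_itv.
  by rewrite E0.
have [b [Lb [ndb Eb]]] := Lam_ray_exhaustion ne.
have -> : Lam `&` `]a, y] = \bigcup_k (Lam `&` `]a, Num.max a (b k)]).
  apply/seteqP; split => z.
    move=> [Lz]; rewrite /= ?in_itv /= => /andP[az zy].
    have : (Lam `&` `]-oo, y]) z by split => //; rewrite /= ?in_itv.
    rewrite Eb => -[k _ [_]]; rewrite /= ?in_itv /= => zb.
    by exists k => //; split => //; rewrite /= ?in_itv /= az le_max zb orbT.
  move=> [k _ [Lz]]; rewrite /= ?in_itv /= => /andP[az zm]; split => //.
  by rewrite /= ?in_itv /= az (le_trans zm) //= ge_max ay; case: (Lb k).
apply: le_measure_bigcup => [k|i j ij|k]; first exact: mLI.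
- apply/subsetPset => z [Lz]; rewrite /= ?in_itv /= => /andP[az zb].
  split => //; rewrite /= ?in_itv /= az (le_trans zb) //.
  by rewrite ge_max !le_max lexx /= (ndb _ _ ij) orbT.
- apply: le_itv => //; last by rewrite le_max lexx.
  by rewrite /Num.max; case: ifP => _ //; case: (Lb k).
Qed.

(* ]x, y] is the decreasing intersection of ]a k, y] where the a k in Lam
   exhaust the ray Lam `&` ]-oo, x]. *)
Lemma le_measure_Lam_itv x y :
  (m1 (Lam `&` `]x, y]) <= m2 (Lam `&` `]x, y]))%E.
Proof.
have [E0|/set0P ne] := eqVneq (Lam `&` `]-oo, x]) set0.
  suff -> : Lam `&` `]x, y] = Lam `&` `]-oo, y] by exact: le_measure_Lam_ray.
  apply/seteqP; split => z [Lz]; rewrite /= ?in_itv /=; first by move=> /andP[_ ->].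
  move=> zy; split => //; rewrite /= ?in_itv /= zy andbT ltNge.
  apply/negP => zx; have : (Lam `&` `]-oo, x]) z by split => //; rewrite /= ?in_itv.
  by rewrite E0.
have [a [La [nda Ea]]] := Lam_ray_exhaustion ne.
have -> : Lam `&` `]x, y] = \bigcap_k (Lam `&` `]a k, y]).
  apply/seteqP; split => z.
    move=> [Lz]; rewrite /= ?in_itv /= => /andP[xz zy] k _; split => //.
    by rewrite /= ?in_itv /= zy andbT; apply: le_lt_trans xz; case: (La k).
  move=> Hz; have [Lz] := Hz 0%N I; rewrite /= ?in_itv /= => /andP[_ zy].
  split => //; rewrite /= ?in_itv /= zy andbT ltNge; apply/negP => zx.
  have : (Lam `&` `]-oo, x]) z by split => //; rewrite /= ?in_itv.
  rewrite Ea => -[k _ [_]]; rewrite /= ?in_itv /= => zak.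
  by have [_] := Hz k I; rewrite /= ?in_itv /= ltNge zak.
apply: le_measure_bigcap => [k|i j ij|||k]; first exact: mLI.
- apply/subsetPset => z [Lz]; rewrite /= ?in_itv /= => /andP[az zy].
  by split => //; rewrite /= ?in_itv /= zy andbT; apply: le_lt_trans az; exact: nda.
- exact: measure_lt_oo.
- exact: measure_lt_oo.
- by apply: le_measure_Lam_itvl; case: (La k).
Qed.

Lemma le_measure_on_support : m1 (~` Lam) = 0%E ->
  forall A, measurable A -> (m1 A <= m2 A)%E.
Proof.
move=> m1_out; apply: le_measure_ocitv => // x y.
apply: (@le_trans _ _ (m1 ((Lam `&` `]x, y]) `|` ~` Lam))).
  apply: le_measure; rewrite ?inE //=.
  - by apply: measurableU; [exact: mLI|exact: measurableC].
  - by move=> z yz; case: (pselect (Lam z)) => Lz; [left|right].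
apply: (@le_trans _ _ (m1 (Lam `&` `]x, y]) + m1 (~` Lam))%E).
  exact: measureU2 (mLI _) (measurableC mL).
rewrite m1_out adde0; apply: le_trans (le_measure_Lam_itv x y) _.
by apply: le_measure; rewrite ?inE // => z [].
Qed.

End support_domination.

Lemma measure_Lam_itv {R : realType} {Lam : set R} {m : {measure set R -> \bar R}}
    {G : R -> R} {a b : R} :
  measurable Lam -> (m setT < +oo)%E ->
  (forall a, Lam a -> m (Lam `&` `]-oo, a]) = (G a)%:E) ->
  Lam a -> Lam b -> a <= b -> m (Lam `&` `]a, b]) = (G b - G a)%:E.
Proof.
move=> mL mT mG La Lb ab.
have -> : Lam `&` `]a, b] = (Lam `&` `]-oo, b]) `\` (Lam `&` `]-oo, a]).
  apply/seteqP; split => z.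
    move=> [Lz]; rewrite /= ?in_itv /= => /andP[az zb].
    split; first by split => //; rewrite /= ?in_itv.
    by move=> [_]; rewrite /= ?in_itv /= leNgt az.
  move=> [[Lz]]; rewrite /= ?in_itv /= => zb za; split => //.
  by rewrite /= ?in_itv /= zb andbT ltNge; apply/negP => za'; apply: za; split.
have mLray c : measurable (Lam `&` `]-oo, c]) by exact: measurableI.
have -> : m ((Lam `&` `]-oo, b]) `\` (Lam `&` `]-oo, a])) =
    (m (Lam `&` `]-oo, b]) - m ((Lam `&` `]-oo, b]) `&` (Lam `&` `]-oo, a])))%E.
  by apply: measureD => //; exact: measure_lt_oo.
have -> : (Lam `&` `]-oo, b]) `&` (Lam `&` `]-oo, a]) = Lam `&` `]-oo, a].
  apply: setIidr => z [Lz]; rewrite /= ?in_itv /= => za; split => //.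
  by rewrite /= ?in_itv /= (le_trans za).
by rewrite mG // mG // EFinB.
Qed.

Lemma le_measure_cdf {R : realType} {Lam : set R} {m1 m2 : {measure set R -> \bar R}}
    {G1 G2 : R -> R} :
  measurable Lam -> (m1 setT < +oo)%E -> (m2 setT < +oo)%E -> m1 (~` Lam) = 0%E ->
  (forall a, Lam a -> m1 (Lam `&` `]-oo, a]) = (G1 a)%:E) ->
  (forall a, Lam a -> m2 (Lam `&` `]-oo, a]) = (G2 a)%:E) ->
  (forall a, Lam a -> G1 a <= G2 a) ->
  (forall a b, Lam a -> Lam b -> a <= b -> G1 b - G1 a <= G2 b - G2 a) ->
  forall A, measurable A -> (m1 A <= m2 A)%E.
Proof.
move=> mL f1 f2 m1_out E1 E2 le_G le_dG.
apply: (le_measure_on_support mL f1 f2) => // [a La|a b La Lb ab].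
  by rewrite E1 // E2 // lee_fin le_G.
by rewrite (measure_Lam_itv mL f1 E1) // (measure_Lam_itv mL f2 E2) // lee_fin le_dG.
Qed.

Section cdf.
Context {R : realType} {Lam : set R}.
Hypothesis mL : measurable Lam.

Let mLray (a : R) : measurable (Lam `&` `]-oo, a]).
Proof. exact: measurableI. Qed.

Lemma paf_cdfE (q : probability R R) a :
  q (Lam `&` `]-oo, a]) = (paf_cdf Lam q a)%:E.
Proof. by rewrite /paf_cdf fineK // fin_num_measure. Qed.

Lemma paf_cdf01 (q : probability R R) a : 0 <= paf_cdf Lam q a <= 1.
Proof.
by rewrite -!lee_fin -paf_cdfE measure_ge0 probability_le1.
Qed.

Lemma paf_cdf_mono (q : probability R R) a b :
  a <= b -> paf_cdf Lam q a <= paf_cdf Lam q b.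
Proof.
move=> ab; rewrite -lee_fin -!paf_cdfE; apply: le_measure; rewrite ?inE //.
by move=> z [Lz]; rewrite /= ?in_itv /= => za; split => //; rewrite /= ?in_itv /= (le_trans za).
Qed.

End cdf.

Lemma paf_cdf_dirac (R : realType) (Lam : set R) (x a : R) :
  Lam x -> paf_cdf Lam (\d_x : probability R R) a = if x <= a then 1 else 0.
Proof.
move=> Lx; rewrite /paf_cdf -[X in fine X]/(\d_x (Lam `&` `]-oo, a]) : \bar R) diracE.
case: ifP => xa; first by rewrite mem_set //=; split => //; rewrite /= in_itv /= xa.
by rewrite memNset //= => -[_]; rewrite /= in_itv /= xa.
Qed.

Lemma paf_cdf_top (R : realType) (Lam : set R) (q : probability R R) a :
  prob_on Lam q -> (forall y, Lam y -> y <= a) -> paf_cdf Lam q a = 1.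
Proof.
move=> Hq Ha; rewrite /paf_cdf.
have -> : Lam `&` `]-oo, a] = Lam by apply: setIidl => z Lz; rewrite /= in_itv /= Ha.
by rewrite Hq.
Qed.

Lemma dirac_prob_on {R : realType} {Lam : set R} {x : R} :
  Lam x -> prob_on Lam (\d_x : probability R R).
Proof. by move=> Lx; rewrite /prob_on -[LHS]/(\d_x Lam : \bar R) diracE mem_set. Qed.

Definition cmaxmin {R : realDomainType} {n : nat} (beta : {set 'I_n} -> R)
    (t : 'I_n -> R) : R :=
  \big[Num.max/0]_(S : {set 'I_n}) Num.min (beta S) (\big[Num.min/1]_(i in S) t i).

Section cmaxmin.
Context {R : realDomainType} {n : nat}.
Implicit Types (beta : {set 'I_n} -> R) (t s : 'I_n -> R).

Lemma cmaxmin_ge0 beta t : 0 <= cmaxmin beta t.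
Proof. exact: bigmax_ge_id. Qed.

Lemma le_cmaxmin beta t S :
  Num.min (beta S) (\big[Num.min/1]_(i in S) t i) <= cmaxmin beta t.
Proof. exact: le_bigmax. Qed.

Lemma cmaxmin_le beta t c :
  0 <= c -> (forall S, Num.min (beta S) (\big[Num.min/1]_(i in S) t i) <= c) ->
  cmaxmin beta t <= c.
Proof. by move=> c0 le_c; apply: bigmax_le. Qed.

Lemma cmaxmin_mono beta t s : (forall i, t i <= s i) -> cmaxmin beta t <= cmaxmin beta s.
Proof.
move=> ts; apply: le_bigmax2 => S _; rewrite le_min !ge_min lexx /=.
by apply/orP; right; apply: le_bigmin2.
Qed.

Lemma bigmin_addr_le (S : {set 'I_n}) t d : 0 <= d ->
  \big[Num.min/1]_(i in S) (t i + d) <= \big[Num.min/1]_(i in S) t i + d.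
Proof.
move=> d0; apply: (big_rec2 (fun x y => y <= x + d)); first by rewrite lerDl.
move=> i x y _ yx; have [tx|xt] := leP (t i) x; first by rewrite ge_min lexx.
by rewrite ge_min yx orbT.
Qed.

Lemma cmaxmin_addr_le beta t d : 0 <= d ->
  cmaxmin beta (fun i => t i + d) <= cmaxmin beta t + d.
Proof.
move=> d0; apply: cmaxmin_le => [|S]; first by rewrite addr_ge0 // cmaxmin_ge0.
apply: le_trans (_ : Num.min (beta S) (\big[Num.min/1]_(i in S) t i) + d <= _).
  have [bM|Mb] := leP (beta S) (\big[Num.min/1]_(i in S) t i).
    by rewrite ge_min lerDl d0.
  by rewrite ge_min bigmin_addr_le ?orbT.
by rewrite lerD2r le_cmaxmin.
Qed.

Lemma cmaxmin_lip beta t s : (forall i, t i <= s i) ->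
  cmaxmin beta s - cmaxmin beta t <= \sum_i s i - \sum_i t i.
Proof.
move=> ts; rewrite -sumrB; set D := \sum_i (s i - t i).
have D0 : 0 <= D by apply: sumr_ge0 => i _; rewrite subr_ge0.
rewrite lerBlDr addrC; apply: le_trans (cmaxmin_addr_le beta t D D0).
apply: cmaxmin_mono => i; rewrite -lerBlDl /D (bigD1 i) //= lerDl.
by apply: sumr_ge0 => j _; rewrite subr_ge0.
Qed.

Lemma cmaxmin_const_le beta c : beta finset.set0 = 0 -> 0 <= c ->
  cmaxmin beta (fun _ => c) <= c.
Proof.
move=> b0 c0; apply: cmaxmin_le => // S; have [->|[i iS]] := set_0Vmem S.
  by rewrite big_set0 b0 ge_min c0.
by rewrite ge_min (bigmin_le_cond _ _ iS) orbT.
Qed.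

Lemma cmaxmin_diag beta c : beta finset.set0 = 0 -> beta finset.setT = 1 ->
  0 <= c <= 1 -> cmaxmin beta (fun _ => c) = c.
Proof.
move=> b0 b1 /andP[c0 c1]; apply/eqP; rewrite eq_le cmaxmin_const_le //=.
apply: le_trans (le_cmaxmin _ _ finset.setT); rewrite b1 le_min c1 /=.
exact: le_bigmin.
Qed.

Lemma cmaxmin_le_sum beta t : beta finset.set0 = 0 -> (forall i, 0 <= t i) ->
  cmaxmin beta t <= \sum_i t i.
Proof.
move=> b0 t0; have := @cmaxmin_lip beta (fun _ => 0) t t0.
rewrite big1_eq subr0 lerBlDr => /le_trans; apply.
by rewrite gerDl cmaxmin_const_le.
Qed.

End cmaxmin.

Lemma repl_id (T : Type) n (p : 'I_n -> T) i q : repl (repl p i q) i (p i) = p.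
Proof. by apply: funext => j; rewrite /repl; case: eqVneq => // ->. Qed.

Lemma repl_profile {R : realType} {n : nat} {Lam : set R} {p : 'I_n -> probability R R}
    (i : 'I_n) {q : probability R R} :
  profile_on Lam p -> prob_on Lam q -> profile_on Lam (repl p i q).
Proof. by move=> Hp Hq j; rewrite /repl; case: eqVneq. Qed.

Definition override {T : Type} {n : nat} (p q : 'I_n -> T) (U : {set 'I_n}) :
  'I_n -> T := fun j => if j \in U then q j else p j.

Section level_SP.
Context {R : realType} {n : nat} {Lam : set R}
  {psi : ('I_n -> probability R R) -> probability R R}.
Hypothesis LSP : level_SP Lam psi.
Local Notation F p a := (paf_cdf Lam (psi p) a).
Local Notation Pc q a := (paf_cdf Lam q a).

(* Raising one agent's CDF at a does not lower Psi(P)(a): otherwise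
   either the original or the deviated report would profit from the change. *)
Lemma level_SP_mono_step p i q a : profile_on Lam p -> prob_on Lam q -> Lam a ->
  Pc (p i) a <= Pc q a -> F p a <= F (repl p i q) a.
Proof.
move=> Hp Hq La le_pq; rewrite leNgt; apply/negP => lt.
have [lt2|ge2] := ltP (Pc (p i) a) (F p a).
  by have := (LSP i p q a Hp Hq La).1 lt2; rewrite leNgt lt.
have gt : F (repl p i q) a < Pc (repl p i q i) a.
  by rewrite /repl eqxx; apply: lt_le_trans lt (le_trans ge2 le_pq).
have := (LSP i _ (p i) a (repl_profile i Hp Hq) (Hp i) La).2 gt.
by rewrite repl_id leNgt lt.
Qed.

Lemma level_SP_fix_above p i q a : profile_on Lam p -> prob_on Lam q -> Lam a ->
  F p a < Pc (p i) a -> F p a < Pc q a -> F (repl p i q) a = F p a.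
Proof.
move=> Hp Hq La h1 h2; apply/eqP; rewrite eq_le (LSP i p q a Hp Hq La).2 //=.
rewrite leNgt; apply/negP => lt.
have gt : F (repl p i q) a < Pc (repl p i q i) a by rewrite /repl eqxx (lt_trans lt).
have := (LSP i _ (p i) a (repl_profile i Hp Hq) (Hp i) La).2 gt.
by rewrite repl_id leNgt lt.
Qed.

Lemma level_SP_fix_below p i q a : profile_on Lam p -> prob_on Lam q -> Lam a ->
  Pc (p i) a < F p a -> Pc q a < F p a -> F (repl p i q) a = F p a.
Proof.
move=> Hp Hq La h1 h2; apply/eqP; rewrite eq_le (LSP i p q a Hp Hq La).1 // andbT.
rewrite leNgt; apply/negP => lt.
have gt : Pc (repl p i q i) a < F (repl p i q) a by rewrite /repl eqxx (lt_trans h2).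
have := (LSP i _ (p i) a (repl_profile i Hp Hq) (Hp i) La).1 gt.
by rewrite repl_id leNgt lt.
Qed.

Lemma override_ind (P : ('I_n -> probability R R) -> Prop) p q (U : {set 'I_n}) :
  profile_on Lam p -> (forall i, prob_on Lam (q i)) -> P p ->
  (forall r i, profile_on Lam r -> P r -> i \in U -> r i = p i ->
     P (repl r i (q i))) ->
  P (override p q U).
Proof.
move=> Hp Hq P0 step.
pose mixs (s : seq 'I_n) j := if j \in s then q j else p j.
have prof s : profile_on Lam (mixs s) by move=> j; rewrite /mixs; case: ifP.
suff mixsP s : uniq s -> {subset s <= U} -> P (mixs s).
  have -> : override p q U = mixs (enum U).
    by apply: funext => j; rewrite /override /mixs mem_enum.
  by apply: mixsP; [exact: enum_uniq|move=> x; rewrite mem_enum].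
elim: s => [|x s IH] /=; first by move=> _ _; have -> : mixs [::] = p by apply: funext.
move=> /andP[xs us] sub.
have -> : mixs (x :: s) = repl (mixs s) x (q x).
  by apply: funext => j; rewrite /mixs /repl in_cons; case: eqVneq => [->|].
apply: step => //; last by rewrite /mixs (negbTE xs).
- by apply: IH => // y ys; apply: sub; rewrite in_cons ys orbT.
- by apply: sub; rewrite in_cons eqxx.
Qed.

Lemma level_SP_monotone p q a : profile_on Lam p -> profile_on Lam q -> Lam a ->
  (forall i, Pc (p i) a <= Pc (q i) a) -> F p a <= F q a.
Proof.
move=> Hp Hq La le_pq.
have -> : q = override p q finset.setT.
  by apply: funext => j; rewrite /override finset.in_setT.
apply: (override_ind (fun r => F p a <= F r a)) => // r i Hr Fr _ ri.
apply: le_trans Fr _; apply: level_SP_mono_step => //.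
by rewrite ri.
Qed.

Lemma level_SP_local p q a : profile_on Lam p -> profile_on Lam q -> Lam a ->
  (forall i, Pc (p i) a = Pc (q i) a) -> F p a = F q a.
Proof.
by move=> Hp Hq La E; apply/eqP; rewrite eq_le !level_SP_monotone // => i; rewrite E.
Qed.

Lemma override_above p q (U : {set 'I_n}) a : profile_on Lam p ->
  (forall i, prob_on Lam (q i)) -> Lam a ->
  (forall i, i \in U -> F p a < Pc (p i) a /\ F p a < Pc (q i) a) ->
  F (override p q U) a = F p a.
Proof.
move=> Hp Hq La above.
apply: (override_ind (fun r => F r a = F p a)) => // r i Hr Fr iU ri.
by have [] := above i iU; rewrite -ri -Fr => *; rewrite level_SP_fix_above.
Qed.

Lemma override_below p q (U : {set 'I_n}) a : profile_on Lam p ->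
  (forall i, prob_on Lam (q i)) -> Lam a ->
  (forall i, i \in U -> Pc (p i) a < F p a /\ Pc (q i) a < F p a) ->
  F (override p q U) a = F p a.
Proof.
move=> Hp Hq La below.
apply: (override_ind (fun r => F r a = F p a)) => // r i Hr Fr iU ri.
by have [] := below i iU; rewrite -ri -Fr => *; rewrite level_SP_fix_below.
Qed.

End level_SP.

Definition two_point {R : realType} {n : nat} (x y : R) (S : {set 'I_n}) :
  'I_n -> probability R R :=
  fun i => if i \in S then (\d_x : probability R R) else (\d_y : probability R R).

Lemma two_point_profile {R : realType} {n : nat} {Lam : set R} {x y : R}
    (S : {set 'I_n}) :
  Lam x -> Lam y -> profile_on Lam (two_point x y S).
Proof. by move=> Lx Ly i; rewrite /two_point; case: ifP => _; exact: dirac_prob_on. Qed.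

Lemma two_point_cdf {R : realType} {n : nat} {Lam : set R} {x y a : R}
    (S : {set 'I_n}) i :
  Lam x -> Lam y -> x <= a -> a < y ->
  paf_cdf Lam (two_point x y S i) a = if i \in S then 1 else 0.
Proof.
move=> Lx Ly xa ay; rewrite /two_point; case: ifP => _; rewrite paf_cdf_dirac // ?xa //.
by rewrite leNgt ay.
Qed.

Section level_SP_maxmin.
Context {R : realType} {n : nat} {Lam : set R}
  {psi : ('I_n -> probability R R) -> probability R R}.
Hypotheses (mL : measurable Lam) (LSP : level_SP Lam psi).
Variables (x y a : R).
Hypotheses (Lx : Lam x) (Ly : Lam y) (La : Lam a) (xa : x <= a) (ay : a < y).
Local Notation F p := (paf_cdf Lam (psi p) a).
Local Notation Pc q := (paf_cdf Lam q a).

Let dx_cdf : Pc (\d_x : probability R R) = 1. Proof. by rewrite paf_cdf_dirac ?xa. Qed.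
Let dy_cdf : Pc (\d_y : probability R R) = 0.
Proof. by rewrite paf_cdf_dirac // leNgt ay. Qed.
Let cdf_beta (S : {set 'I_n}) (i : 'I_n) : Pc (two_point x y S i) = if i \in S then 1 else 0.
Proof. exact: two_point_cdf. Qed.

(* Each term of the max-min is at most F p: either some i in S has
   P_i(a) <= F p, or moving all agents above F p to delta_x keeps F p and
   dominates the two-point profile of S. *)
Lemma maxmin_le_level_SP p : profile_on Lam p ->
  cmaxmin (fun S => F (two_point x y S)) (fun i => Pc (p i)) <= F p.
Proof.
move=> Hp; have /andP[g0 _] := paf_cdf01 mL (psi p) a.
apply: cmaxmin_le => // S.
have [[i iS ti]|above] := pselect (exists2 i, i \in S & Pc (p i) <= F p).
  by rewrite ge_min (le_trans (bigmin_le_cond _ _ iS) ti) orbT.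
have S_above i : i \in S -> F p < Pc (p i).
  by move=> iS; rewrite ltNge; apply/negP => tg; apply: above; exists i.
set U := [set i | F p < Pc (p i)]%SET.
have FU : F (override p (fun _ => \d_x) U) = F p.
  apply: override_above => // [i|i]; first exact: dirac_prob_on.
  rewrite inE => gti; split => //; rewrite dx_cdf.
  by apply: lt_le_trans gti _; case/andP: (paf_cdf01 mL (p i) a).
rewrite ge_min -FU level_SP_monotone //.
- exact: two_point_profile.
- by move=> i; rewrite /override; case: ifP => _; [exact: dirac_prob_on|exact: Hp].
move=> i; rewrite cdf_beta /override; case: ifPn => iS.
  by rewrite inE S_above // dx_cdf.
by case: ifP => _; [rewrite dx_cdf|]; case/andP: (paf_cdf01 mL (p i) a).
Qed.

(* Conversely the term of V = {i | F p <= P_i(a)} is at least F p: moving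
   the agents below F p to delta_y keeps F p and is dominated by the
   two-point profile of V. *)
Lemma level_SP_le_maxmin p : profile_on Lam p ->
  F p <= cmaxmin (fun S => F (two_point x y S)) (fun i => Pc (p i)).
Proof.
move=> Hp; have /andP[g0 g1] := paf_cdf01 mL (psi p) a.
set V := [set i | F p <= Pc (p i)]%SET.
apply: le_trans (le_cmaxmin _ _ V); rewrite le_min; apply/andP; split; last first.
  by apply: le_bigmin => // i; rewrite inE.
have FV : F (override p (fun _ => \d_y) (~: V)) = F p.
  apply: override_below => // [i|i]; first exact: dirac_prob_on.
  rewrite !inE -ltNge => tig; split => //; rewrite dy_cdf.
  by apply: le_lt_trans tig; case/andP: (paf_cdf01 mL (p i) a).
rewrite -[X in X <= _]FV level_SP_monotone //.
- by move=> i; rewrite /override; case: ifP => _; [exact: dirac_prob_on|exact: Hp].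
- exact: two_point_profile.
move=> i; rewrite cdf_beta /override !inE.
by case: (boolP (F p <= _)) => _ /=; [case/andP: (paf_cdf01 mL (p i) a)|rewrite dy_cdf].
Qed.

Lemma level_SP_maxmin p : profile_on Lam p ->
  F p = cmaxmin (fun S => F (two_point x y S)) (fun i => Pc (p i)).
Proof.
by move=> Hp; apply/eqP; rewrite eq_le level_SP_le_maxmin ?maxmin_le_level_SP.
Qed.

End level_SP_maxmin.

Lemma probability_eq_on_full {R : realType} {q : probability R R} {A B C : set R} :
  measurable A -> measurable B -> measurable C -> q A = 1%E ->
  B `&` A = C `&` A -> q B = q C.
Proof.
move=> mA mB mC qA BC.
have qAC : q (~` A) = 0%E by rewrite probability_setC // qA subee.
have restrict D : measurable D -> q D = q (D `&` A).
  move=> mD; apply/eqP; rewrite eq_le; apply/andP; split; last first.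
    by apply: le_measure; rewrite ?inE //; try exact: measurableI; move=> z [].
  apply: (@le_trans _ _ (q ((D `&` A) `|` ~` A))).
    apply: le_measure; rewrite ?inE //.
    - by apply: measurableU; [exact: measurableI|exact: measurableC].
    - by move=> z Dz; case: (pselect (A z)) => Az; [left|right].
  apply: (@le_trans _ _ (q (D `&` A) + q (~` A))%E).
    by apply: measureU2; [exact: measurableI|exact: measurableC].
  by rewrite qAC adde0.
by rewrite restrict // BC -restrict.
Qed.

Section certainty_preserving_two_point.
Context {R : realType} {n : nat} {Lam : set R}
  {psi : ('I_n -> probability R R) -> probability R R}.
Hypotheses (mL : measurable Lam) (CP : certainty_preserving Lam psi).
Local Notation F p a := (paf_cdf Lam (psi p) a).

Let mLray (a : R) : measurable (Lam `&` `]-oo, a]).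
Proof. exact: measurableI. Qed.

Lemma two_point_carried x y (S : {set 'I_n}) B : Lam x -> Lam y ->
  measurable B -> B `<=` Lam -> (forall i, B (if i \in S then x else y)) ->
  psi (two_point x y S) B = 1%E.
Proof.
move=> Lx Ly mB BL Brep; apply: CP => // [|i]; first exact: two_point_profile.
by have := Brep i; rewrite /two_point; case: ifP => _ Bi;
  rewrite -[LHS]/(\d_ _ B : \bar R) diracE mem_set.
Qed.

Lemma certainty_preserving_two_point_const x y a a' (S : {set 'I_n}) :
  Lam x -> Lam y -> x <= a -> a < y -> x <= a' -> a' < y ->
  F (two_point x y S) a = F (two_point x y S) a'.
Proof.
move=> Lx Ly xa ay xa' ay'.
set A := [set x] `|` [set y].
have mA : measurable A by apply: measurableU; exact: measurable_set1.
have H1 : psi (two_point x y S) A = 1%E.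
  by apply: two_point_carried => // [z [->|->] //|i]; case: ifP; [left|right].
rewrite /paf_cdf (@probability_eq_on_full _ _ A _ (Lam `&` `]-oo, a']) mA) //.
apply/seteqP; split => z [[Lz]]; rewrite /= ?in_itv /= => za [zx|zy];
  rewrite ?zx ?zy in za *.
- by split; [split=> //; rewrite /= in_itv /= |left].
- by move: (le_lt_trans za ay); rewrite ltxx.
- by split; [split=> //; rewrite /= in_itv /= |left].
- by move: (le_lt_trans za ay'); rewrite ltxx.
Qed.

Lemma certainty_preserving_two_point_set0 x y a : Lam x -> Lam y -> a < y ->
  F (two_point x y (finset.set0 : {set 'I_n})) a = 0.
Proof.
move=> Lx Ly ay.
have mA : measurable [set y] by exact: measurable_set1.
have H1 : psi (two_point x y finset.set0) [set y] = 1%E.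
  by apply: two_point_carried => // [z ->|i] //; rewrite finset.in_set0.
have E : (Lam `&` `]-oo, a]) `&` [set y] = set0 `&` [set y].
  apply/seteqP; split; last by move=> z [].
  move=> z [[Lz]]; rewrite /= ?in_itv /= => za zy; rewrite zy in za.
  by move: (le_lt_trans za ay); rewrite ltxx.
by rewrite /paf_cdf (probability_eq_on_full mA (mLray a) measurable0 H1 E) measure0.
Qed.

Lemma certainty_preserving_two_point_setT x y a : Lam x -> Lam y -> x <= a ->
  F (two_point x y (finset.setT : {set 'I_n})) a = 1.
Proof.
move=> Lx Ly xa.
have mA : measurable [set x] by exact: measurable_set1.
have H1 : psi (two_point x y finset.setT) [set x] = 1%E.
  by apply: two_point_carried => // [z ->|i] //; rewrite finset.in_setT.
have E : (Lam `&` `]-oo, a]) `&` [set x] = setT `&` [set x].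
  by apply/seteqP; split => z [Hz zx] //; rewrite zx; split => //; split.
by rewrite /paf_cdf (probability_eq_on_full mA (mLray a) measurableT H1 E) probability_setT.
Qed.

End certainty_preserving_two_point.

Definition phantom_constants {R : realType} {n : nat} (beta : {set 'I_n} -> R) : Prop :=
  [/\ forall S, 0 <= beta S <= 1,
      forall S S2 : {set 'I_n}, S \subset S2 -> beta S <= beta S2,
      beta finset.set0 = 0 & beta finset.setT = 1].

Definition cmaxmin_representation {R : realType} {n : nat} (Lam : set R)
    (psi : ('I_n -> probability R R) -> probability R R) (beta : {set 'I_n} -> R) :=
  forall p, profile_on Lam p -> forall a, Lam a ->
    paf_cdf Lam (psi p) a = cmaxmin beta (fun i => paf_cdf Lam (p i) a).

Lemma phantom_constants_unanimity {R : realType} {n : nat} : (0 < n)%N ->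
  phantom_constants (fun S : {set 'I_n} => if S == finset.setT then 1 else 0 : R).
Proof.
move=> n0; split => [S|S S2 sub||]; rewrite ?eqxx //.
- by case: ifP => _; rewrite ?lexx ?ler01.
- case: (S =P finset.setT) => [ST|_]; last by case: ifP => _; rewrite ?ler01.
  suff -> : S2 = finset.setT by rewrite eqxx.
  by apply/eqP; rewrite finset.eqEsubset finset.subsetT -ST.
- case: eqP => // E; have := finset.in_setT (Ordinal n0).
  by rewrite -E finset.in_set0.
Qed.

Section certainty_preserving_representation.
Context {R : realType} {n : nat} {Lam : set R}
  {psi : ('I_n -> probability R R) -> probability R R}.
Hypotheses (mL : measurable Lam) (PAF : is_PAF Lam psi).
Local Notation F p a := (paf_cdf Lam (psi p) a).
Local Notation Pc q a := (paf_cdf Lam q a).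

(* Above all of Lam every CDF is 1, so any admissible max-min formula holds. *)
Lemma cmaxmin_at_top (beta : {set 'I_n} -> R) p a :
  phantom_constants beta -> profile_on Lam p -> (forall y, Lam y -> y <= a) ->
  F p a = cmaxmin beta (fun i => Pc (p i) a).
Proof.
move=> [_ _ b0 b1] Hp top; rewrite paf_cdf_top //; last exact: PAF.
have -> : (fun i => Pc (p i) a) = (fun _ => 1) by apply: funext => i; rewrite paf_cdf_top.
by rewrite cmaxmin_diag // ler01 lexx.
Qed.

Hypotheses (LSP : level_SP Lam psi) (CP : certainty_preserving Lam psi).

(* For a certainty preserving Level-SP PAF, the value at a of the two-point
   profile of S does not depend on the points x <= a < y of Lam: move both
   profiles to a common wider pair (level_SP_local) and use that the CDF is
   constant in between. *)
Lemma certainty_preserving_two_point_value x y a x' y' a' (S : {set 'I_n}) :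
  Lam x -> Lam y -> Lam a -> x <= a -> a < y ->
  Lam x' -> Lam y' -> Lam a' -> x' <= a' -> a' < y' ->
  F (two_point x y S) a = F (two_point x' y' S) a'.
Proof.
move=> Lx Ly La xa ay Lx' Ly' La' xa' ay'.
set lo := Num.min x x'; set hi := Num.max y y'.
have Llo : Lam lo by rewrite /lo /Num.min; case: ifP.
have Lhi : Lam hi by rewrite /hi /Num.max; case: ifP.
have lo_a : lo <= a by rewrite (le_trans _ xa) // ge_min lexx.
have lo_a' : lo <= a' by rewrite (le_trans _ xa') // ge_min lexx orbT.
have a_hi : a < hi by rewrite lt_max ay.
have a'_hi : a' < hi by rewrite lt_max ay' orbT.
have to_wide u v b : Lam u -> Lam v -> Lam b -> u <= b -> b < v -> lo <= b ->
    b < hi -> F (two_point u v S) b = F (two_point lo hi S) b.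
  move=> Lu Lv Lb ub bv lob bhi; apply: level_SP_local => //; try exact: two_point_profile.
  by move=> i; rewrite !two_point_cdf.
rewrite to_wide // (to_wide x' y') //.
exact: certainty_preserving_two_point_const.
Qed.

Variables (a0 y0 : R).
Hypotheses (La0 : Lam a0) (Ly0 : Lam y0) (a0y0 : a0 < y0).

Lemma certainty_preserving_phantom_constants :
  phantom_constants (fun S => F (two_point a0 y0 S) a0).
Proof.
split => [S|S S2 sub||].
- exact: paf_cdf01.
- apply: level_SP_monotone => //; try exact: two_point_profile.
  move=> i; rewrite !two_point_cdf //; case: ifPn => iS.
    by rewrite (fintype.subsetP sub _ iS).
  by case: ifP.
- exact: certainty_preserving_two_point_set0.
- exact: certainty_preserving_two_point_setT.
Qed.

Lemma certainty_preserving_cmaxmin_representation :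
  cmaxmin_representation Lam psi (fun S => F (two_point a0 y0 S) a0).
Proof.
move=> p Hp a La.
have [[y [Ly ay]]|top] := pselect (exists y, Lam y /\ a < y); last first.
  apply: cmaxmin_at_top => // [|y Ly]; first exact: certainty_preserving_phantom_constants.
  by rewrite leNgt; apply/negP => ay; apply: top; exists y.
rewrite (level_SP_maxmin mL LSP a y a La Ly La (lexx a) ay p Hp).
congr cmaxmin; apply: funext => S.
exact: certainty_preserving_two_point_value.
Qed.

End certainty_preserving_representation.

(* Certainty preservation yields admissible constant phantoms; if Lam has
   no two points, every point of Lam is its maximum and the phantoms of
   unanimity do. *)
Lemma certainty_preserving_cmaxmin {R : realType} {n : nat} {Lam : set R}
    {psi : ('I_n -> probability R R) -> probability R R} :
  (0 < n)%N -> measurable Lam -> is_PAF Lam psi -> level_SP Lam psi ->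
  certainty_preserving Lam psi ->
  exists beta, phantom_constants beta /\ cmaxmin_representation Lam psi beta.
Proof.
move=> n0 mL PAF LSP CP.
have [[a0 [y0 [La0 [Ly0 a0y0]]]]|single] :=
  pselect (exists a0 y0, Lam a0 /\ Lam y0 /\ a0 < y0).
  exists (fun S => paf_cdf Lam (psi (two_point a0 y0 S)) a0); split.
    exact: certainty_preserving_phantom_constants.
  exact: certainty_preserving_cmaxmin_representation.
exists (fun S => if S == finset.setT then 1 else 0); split.
  exact: phantom_constants_unanimity.
move=> p Hp a La; apply: cmaxmin_at_top => // [|y Ly].
  exact: phantom_constants_unanimity.
by rewrite leNgt; apply/negP => ay; apply: single; exists a, y.
Qed.

Section cmaxmin_consequences.
Context {R : realType} {n : nat} {Lam : set R}
  {psi : ('I_n -> probability R R) -> probability R R}.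
Hypotheses (mL : measurable Lam) (PAF : is_PAF Lam psi).
Context {beta : {set 'I_n} -> R}.
Hypothesis rep : cmaxmin_representation Lam psi beta.

Let prob_fin (m : probability R R) : (m setT < +oo)%E.
Proof. by rewrite probability_setT ltry. Qed.

Let psi_out p : profile_on Lam p -> psi p (~` Lam) = 0%E.
Proof. by move=> Hp; rewrite probability_setC // PAF // subee. Qed.

(* psi(p) is dominated by the sum of the p_i: on rays and intervals of Lam
   this is [cmaxmin_le_sum] and [cmaxmin_lip]. *)
Lemma cmaxmin_le_sum_measure p : beta finset.set0 = 0 -> profile_on Lam p ->
  forall A, measurable A -> (psi p A <= (\sum_i fine (p i A))%:E)%E.
Proof.
move=> b0 Hp.
pose ms : nat -> {measure set R -> \bar R} := fun k =>
  if (insub k : option 'I_n) is Some i then (p i : {measure set R -> \bar R}) else mzero.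
have sumE X : measurable X -> msum ms n X = (\sum_i fine (p i X))%:E.
  move=> mX; rewrite /msum -sumEFin; apply: eq_bigr => k _.
  by rewrite /ms valK /= fineK // fin_num_measure.
have sum_fin : (msum ms n setT < +oo)%E by rewrite sumE // ltry.
move=> A mA; rewrite -sumE //.
apply: (le_measure_cdf (G1 := fun a => paf_cdf Lam (psi p) a)
  (G2 := fun a => \sum_i paf_cdf Lam (p i) a) mL (prob_fin (psi p)) sum_fin (psi_out _ Hp)) => //.
- by move=> a La; exact: paf_cdfE.
- by move=> a La; exact: sumE (measurableI _ _ mL (measurable_itv _)).
- move=> a La; rewrite rep //; apply: cmaxmin_le_sum => // i.
  by case/andP: (paf_cdf01 mL (p i) a).
- move=> a b La Lb ab; rewrite !rep //; apply: cmaxmin_lip => i.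
  exact: paf_cdf_mono.
Qed.

Lemma cmaxmin_certainty_preserving : beta finset.set0 = 0 ->
  certainty_preserving Lam psi.
Proof.
move=> b0 p Hp A mA AL pA.
have pAC i : p i (~` A) = 0%E by rewrite probability_setC // pA subee.
have psiAC : psi p (~` A) = 0%E.
  apply/eqP; rewrite eq_le measure_ge0 andbT.
  rewrite (le_trans (cmaxmin_le_sum_measure p b0 Hp _ (measurableC mA))) //.
  by rewrite big1 // => i _; rewrite pAC.
by have := probability_setC (psi p) (measurableC mA); rewrite setCK psiAC sube0.
Qed.

(* On a unanimous profile (p, ..., p) the formula gives back the CDF of p, so
   psi(p, ..., p) and p dominate each other. *)
Lemma cmaxmin_unanimous : beta finset.set0 = 0 -> beta finset.setT = 1 ->
  unanimous Lam psi.
Proof.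
move=> b0 b1 q Hq A mA.
have Hp : profile_on Lam (fun _ : 'I_n => q) by [].
have E a : Lam a -> paf_cdf Lam (psi (fun _ => q)) a = paf_cdf Lam q a.
  by move=> La; rewrite rep // cmaxmin_diag // paf_cdf01.
have q_out : q (~` Lam) = 0%E by rewrite probability_setC // Hq subee.
apply/eqP; rewrite eq_le; apply/andP; split.
  apply: (le_measure_cdf (G1 := paf_cdf Lam q) (G2 := paf_cdf Lam q) mL
    (prob_fin (psi (fun _ => q))) (prob_fin q) (psi_out _ Hp)) => //.
  - by move=> a La; rewrite -E //; exact: paf_cdfE.
  - by move=> a La; exact: paf_cdfE.
apply: (le_measure_cdf (G1 := paf_cdf Lam q) (G2 := paf_cdf Lam q) mL
  (prob_fin q) (prob_fin (psi (fun _ => q))) q_out) => //.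
- by move=> a La; exact: paf_cdfE.
- by move=> a La; rewrite -E //; exact: paf_cdfE.
Qed.

End cmaxmin_consequences.

Lemma cmaxmin_maxmin_representation {R : realType} {n : nat} {Lam : set R}
    {psi : ('I_n -> probability R R) -> probability R R} (beta : {set 'I_n} -> R) :
  phantom_constants beta -> cmaxmin_representation Lam psi beta ->
  maxmin_representation Lam psi (fun S _ => beta S).
Proof.
move=> [b01 bmono _ _] rep; split => [S|]; last by split => // S S2 a _; exact: bmono.
split; first by move=> a _; exact: b01.
split; first by move=> a b _ _ _; rewrite lexx.
by move=> a _ e e0; exists 1 => // b _ _ _; rewrite subrr normr0.
Qed.

(* If Lam is a single point, every event of probability one for some agent
   (n > 0) contains Lam, so every PAF is certainty preserving. *)
Lemma single_point_certainty_preserving {R : realType} {n : nat} {Lam : set R}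
    {psi : ('I_n -> probability R R) -> probability R R} :
  (0 < n)%N -> is_PAF Lam psi -> ~ (exists x y, Lam x /\ Lam y /\ x < y) ->
  certainty_preserving Lam psi.
Proof.
move=> n0 PAF single p Hp A mA AL pA.
have [z Az] : A !=set0.
  apply/set0P/negP => /eqP A0; have := pA (Ordinal n0); rewrite A0 measure0.
  by move=> /esym /eqP; rewrite onee_eq0.
suff -> : A = Lam by exact: PAF.
apply/seteqP; split => // w Lw; have Lz := AL z Az.
have [wz|zw|-> //] := ltgtP w z; exfalso; apply: single.
- by exists w, z.
- by exists z, w.
Qed.

(* A unanimous PAF represented with constant phantom functions f_S has
   beta_0 = f_0 = 0: at the profile where everybody reports delta_y, the
   value at x < y is both 0 (unanimity) and at least min(f_0, 1) = f_0. *)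
Lemma constant_phantoms_certainty_preserving {R : realType} {n : nat} {Lam : set R}
    {psi : ('I_n -> probability R R) -> probability R R} (f : {set 'I_n} -> R -> R) :
  (0 < n)%N -> measurable Lam -> is_PAF Lam psi -> unanimous Lam psi ->
  maxmin_representation Lam psi f -> (forall S, constant_on Lam (f S)) ->
  certainty_preserving Lam psi.
Proof.
move=> n0 mL PAF U [fph [_ frep]] fconst.
have [[x [y [Lx [Ly xy]]]]|single] := pselect (exists x y, Lam x /\ Lam y /\ x < y);
  last exact: single_point_certainty_preserving.
have rep : cmaxmin_representation Lam psi (fun S => f S x).
  move=> p Hp a La; rewrite frep //; apply: eq_bigr => S _.
  by rewrite (fconst S a x La Lx).
apply: (cmaxmin_certainty_preserving mL PAF rep).
have Hd : profile_on Lam (fun _ : 'I_n => (\d_y : probability R R)).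
  by move=> i; exact: dirac_prob_on.
have /andP[f0 f1] := (fph finset.set0).1 x Lx.
have psi_dy : paf_cdf Lam (psi (fun _ => \d_y)) x = 0.
  rewrite /paf_cdf (U _ (dirac_prob_on Ly) _ (measurableI _ _ mL (measurable_itv _))).
  rewrite -[X in fine X]/(\d_y (Lam `&` `]-oo, x]) : \bar R) diracE memNset //=.
  by move=> -[_]; rewrite /= in_itv /= leNgt xy.
have := le_cmaxmin (fun S => f S x) (fun i => paf_cdf Lam (\d_y : probability R R) x)
  finset.set0.
rewrite big_set0 (min_idPl f1) -(rep _ Hd x Lx) psi_dy => f0_le.
by apply/eqP; rewrite eq_le f0_le f0.
Qed.

Theorem mainTheorem4 (R : realType) (n : nat) (Lam : set R)
  (psi : ('I_n -> probability R R) -> probability R R) :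
  (0 < n)%N -> measurable Lam -> Lam !=set0 ->
  is_PAF Lam psi -> level_SP Lam psi ->
  (certainty_preserving Lam psi <->
     unanimous Lam psi /\
     exists f : {set 'I_n} -> R -> R,
       maxmin_representation Lam psi f /\ (forall S, constant_on Lam (f S))) /\
  (certainty_preserving Lam psi <->
     exists beta : {set 'I_n} -> R,
       (forall S, 0 <= beta S <= 1) /\
       (forall S S2 : {set 'I_n}, S \subset S2 -> beta S <= beta S2) /\
       beta (finset.set0 : {set 'I_n}) = 0 /\ beta (finset.setT : {set 'I_n}) = 1 /\
       (forall p, profile_on Lam p -> forall a, Lam a ->
          paf_cdf Lam (psi p) a =
          \big[Num.max/0]_(S : {set 'I_n})
             Num.min (beta S) (\big[Num.min/1]_(i in S) paf_cdf Lam (p i) a))).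
Proof.
move=> n0 mL _ PAF LSP; split; split.
- move=> /(certainty_preserving_cmaxmin n0 mL PAF LSP) [beta [adm rep]].
  have [_ _ b0 b1] := adm.
  split; first exact: (cmaxmin_unanimous mL PAF rep b0 b1).
  exists (fun S _ => beta S); split; first exact: cmaxmin_maxmin_representation.
  by move=> S a b _ _.
- by move=> [U [f [frep fconst]]]; exact: (constant_phantoms_certainty_preserving f n0 mL PAF U frep fconst).
- move=> /(certainty_preserving_cmaxmin n0 mL PAF LSP) [beta [[b01 bmono b0 b1] rep]].
  by exists beta; do !split.
- by move=> [beta [_ [_ [b0 [_ rep]]]]]; exact: (cmaxmin_certainty_preserving mL PAF rep b0).
Qed.
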